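(* Let $\bm H_S$ be a finite-dimensional Hilbert space, $\rho$ a density operator on $\bm H_S$, and $\{E_b\}_{b\in B}$ a POVM on $\bm H_S$ with finite outcome set $B$. Put $p(b):=\mathrm{tr}[E_b\rho]$ and, for $p(b)>0$, $\rho_b:=\sqrt{E_b}\,\rho\,\sqrt{E_b}/p(b)$. Let $\bm H_R$ be a finite-dimensional Hilbert space and $|\Psi\rangle\in\bm H_S\otimes\bm H_R$ a purification of $\rho$, i.e. $\mathrm{tr}_R[|\Psi\rangle\langle\Psi|]=\rho$. Define $\rho^R:=\mathrm{tr}_S[|\Psi\rangle\langle\Psi|]$ and, for $p(b)>0$, $\rho^R_b:=\mathrm{tr}_S[(\sqrt{E_b}\otimes I^R)|\Psi\rangle\langle\Psi|(\sqrt{E_b}\otimes I^R)]/p(b)$, where $I^R$ is the identity on $\bm H_R$. Then $$S(\rho)-\sum_b p(b)\,S(\rho_b)=S(\rho^R)-\sum_b p(b)\,S(\rho^R_b),$$ where the sums range over $b$ with $p(b)>0$. That is, the QC-mutual information $I^{S:B}_{\rm QC}$ equals the $\chi$-quantity $\chi^{BR}$ of the ensemble $\{p(b),\rho^R_b\}$.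
   Context: A POVM is a family $\{E_b\}$ of positive operators with $\sum_b E_b=I$. $S(\sigma):=-\mathrm{tr}[\sigma\ln\sigma]$ is the von Neumann entropy (with $0\ln 0=0$). The QC-mutual information is $I^{S:B}_{\rm QC}:=S(\rho)-\sum_b p(b)S(\rho_b)$, and the $\chi$-quantity of an ensemble $\{p(b),\sigma_b\}$ with $\sigma=\sum_b p(b)\sigma_b$ is $S(\sigma)-\sum_b p(b)S(\sigma_b)$; note $\rho^R=\sum_b p(b)\rho^R_b$. *)

From HB Require Import structures.
From mathcomp Require Import all_boot all_order all_algebra.
From mathcomp Require Import sesquilinear spectral.
From mathcomp Require Import complex mxtens.
From mathcomp Require Import reals exp.

Set Implicit Arguments.
Unset Strict Implicit.
Unset Printing Implicit Defensive.

Import Order.TTheory GRing.Theory Num.Theory.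
Local Open Scope ring_scope.
Local Open Scope complex_scope.

Section Quantum.
Variable R : realType.
Local Notation C := (R[i]).

Definition adj (m n : nat) (A : 'M[C]_(m, n)) : 'M[C]_(n, m) :=
  (map_mx (@Num.conj C) A)^T.

Definition psd (n : nat) (A : 'M[C]_n) : Prop :=
  A \is hermsymmx /\ forall v : 'rV[C]_n, 0 <= (v *m A *m adj v) 0 0.

Definition density (n : nat) (rho : 'M[C]_n) : Prop :=
  psd rho /\ \tr rho = 1.

Definition povm (n : nat) (B : finType) (E : B -> 'M[C]_n) : Prop :=
  (forall b, psd (E b)) /\ \sum_(b : B) E b = 1%:M.

(* Functional calculus for a Hermitian matrix, via its spectral decomposition
   A = P^-1 diag(d) P (P unitary, d real): f(A) = P^-1 diag(f d) P. *)
Definition mx_fun (f : R -> R) (n : nat) (A : 'M[C]_n) : 'M[C]_n :=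
  invmx (spectralmx A)
    *m diag_mx (map_mx (fun z : C => (f (complex.Re z))%:C) (spectral_diag A))
    *m spectralmx A.

Definition msqrt (n : nat) (A : 'M[C]_n) : 'M[C]_n := mx_fun (@Num.sqrt R) A.

Definition xlnx (x : R) : R := if x == 0 then 0 else x * ln x.

Definition vN_entropy (n : nat) (s : 'M[C]_n) : R :=
  - complex.Re (\tr (mx_fun xlnx s)).

(* partial traces on H_S (x) H_R = C^n (x) C^m, indexed as in mxtens *)
Definition ptrR (n m : nat) (X : 'M[C]_(n * m)) : 'M[C]_n :=
  \matrix_(i, j) \sum_(k < m) X (mxtens_index (i, k)) (mxtens_index (j, k)).

Definition ptrS (n m : nat) (X : 'M[C]_(n * m)) : 'M[C]_m :=
  \matrix_(k, l) \sum_(i < n) X (mxtens_index (i, k)) (mxtens_index (i, l)).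

Definition ketbra (d : nat) (psi : 'cV[C]_d) : 'M[C]_d := psi *m adj psi.

End Quantum.

(* For a Hermitian matrix A and any f with f 0 = 0, tr f(A) depends only on the
   traces of the powers A^k, k >= 1: interpolating f at the spectrum by a
   polynomial q with q 0 = 0 turns tr f(A) into a combination of these traces.
   Write the purification Psi as an n x m matrix Y, so that tr_R |Psi><Psi| = Y Y*
   and tr_S |Psi><Psi| = (Y* Y)^T.  Since tr (X Y)^k = tr (Y X)^k for k >= 1,
   both reduced states have the same entropy.  The same holds for the
   post-measurement states, whose purification (sqrt(E_b) (x) I) Psi reshapes to
   sqrt(E_b) Y, so the two sides of the identity agree term by term. *)
From HB Require Import structures.
From mathcomp Require Import all_boot all_order all_algebra.
From mathcomp Require Import sesquilinear spectral.
From mathcomp Require Import complex mxtens.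
From mathcomp Require Import reals exp.

Set Implicit Arguments.
Unset Strict Implicit.
Unset Printing Implicit Defensive.

Import Order.TTheory GRing.Theory Num.Theory.
Local Open Scope ring_scope.
Local Open Scope complex_scope.

Lemma exists_interpolation_poly (F : fieldType) (s : seq F) (g : F -> F) :
  uniq s -> exists q : {poly F}, {in s, forall x, q.[x] = g x}.
Proof.
move=> s_uniq.
pose L a := \prod_(t <- s | t != a) ('X - t%:P).
have L_root a x : x \in s -> x != a -> (L a).[x] = 0.
  move=> xs xa; rewrite /L -big_filter horner_prod (bigD1_seq x) /=.
  - by rewrite hornerXsubC subrr mul0r.
  - by rewrite mem_filter xa.
  - exact: filter_uniq.
have L_neq0 a : (L a).[a] != 0.
  rewrite /L horner_prod prodf_seq_neq0; apply/allP => t _; apply/implyP => ta.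
  by rewrite hornerXsubC subr_eq0 eq_sym.
exists (\sum_(a <- s) (g a / (L a).[a]) *: L a) => x xs.
rewrite horner_sum (bigD1_seq x) //= hornerZ divfK // big_seq_cond big1 ?addr0 //.
by move=> a /andP[_ ax]; rewrite hornerZ (L_root a x xs) ?mulr0 // eq_sym.
Qed.

Section MatrixPowers.
Variable F : comPzRingType.

Lemma mxtrace_expMC m n (X : 'M[F]_(m, n)) (Y : 'M[F]_(n, m)) k :
  \tr ((X *m Y) ^+ k.+1) = \tr ((Y *m X) ^+ k.+1).
Proof.
have -> : (X *m Y) ^+ k.+1 = X *m ((Y *m X) ^+ k) *m Y.
  elim: k => [|k IH]; first by rewrite expr1 expr0 mulmx1.
  by rewrite exprS -mulmxE IH exprS -mulmxE !mulmxA.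
by rewrite mxtrace_mulC mulmxA exprSr -mulmxE mxtrace_mulC.
Qed.

Lemma trmxX n (A : 'M[F]_n) k : (A ^T) ^+ k = (A ^+ k)^T.
Proof.
elim: k => [|k IH]; first by rewrite !expr0 trmx1.
by rewrite exprS IH -mulmxE -trmx_mul mulmxE -exprSr.
Qed.

Lemma scalemxX n (c : F) (A : 'M[F]_n) k : (c *: A) ^+ k = c ^+ k *: A ^+ k.
Proof.
elim: k => [|k IH]; first by rewrite !expr0 scale1r.
by rewrite !exprS -!mulmxE IH -scalemxAl -scalemxAr scalerA.
Qed.

Lemma diag_mxX n (d : 'rV[F]_n) k :
  diag_mx d ^+ k = diag_mx (map_mx (fun x => x ^+ k) d).
Proof.
elim: k => [|k IH].
  rewrite expr0 (_ : map_mx _ d = const_mx 1) ?diag_const_mx //.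
  by apply/matrixP => i j; rewrite !mxE.
rewrite exprS -mulmxE IH mulmx_diag; apply: congr1.
by apply/matrixP => i j; rewrite !mxE ord1 exprS.
Qed.

End MatrixPowers.

Lemma invmx_conjX (F : fieldType) n (P A : 'M[F]_n) k : P \in unitmx ->
  (invmx P *m A *m P) ^+ k = invmx P *m A ^+ k *m P.
Proof.
move=> P_unit; elim: k => [|k IH]; first by rewrite !expr0 mulmx1 mulVmx.
by rewrite !exprS -!mulmxE IH !mulmxA -[_ *m P *m invmx P]mulmxA mulmxV // mulmx1.
Qed.

Section QuantumEntropy.
Variable R : realType.
Local Notation C := (R[i]).

(* [conjc_real] restated for [Num.conj], which [rewrite] does not match with [conjc]. *)
Lemma conjC_real (r : R) : Num.conj r%:C = r%:C.
Proof. exact: conjc_real. Qed.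

Lemma adjM m n p (A : 'M[C]_(m, n)) (B : 'M[C]_(n, p)) :
  adj (A *m B) = adj B *m adj A.
Proof. by rewrite /adj map_mxM trmx_mul. Qed.

Lemma adjK m n (A : 'M[C]_(m, n)) : adj (adj A) = A.
Proof. by apply/matrixP => i j; rewrite !mxE conjCK. Qed.

Lemma adjZ m n c (A : 'M[C]_(m, n)) : adj (c *: A) = Num.conj c *: adj A.
Proof. by apply/matrixP => i j; rewrite !mxE rmorphM. Qed.

Lemma adj_tens m n p q (A : 'M[C]_(m, n)) (B : 'M[C]_(p, q)) :
  adj (A *t B) = adj A *t adj B.
Proof. by apply/matrixP => i j; rewrite !mxE rmorphM. Qed.

Lemma adj1mx n : adj (1%:M : 'M[C]_n) = 1%:M.
Proof.
apply/matrixP => i j; rewrite !mxE eq_sym.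
by case: (i == j); rewrite ?mulr1n ?mulr0n ?conjC0 ?conjC1.
Qed.

Lemma selfadj_normalmx n (A : 'M[C]_n) : adj A = A -> A \is normalmx.
Proof.
move=> A_selfadj; apply: hermitian_normalmx; apply/is_hermitianmxP.
by rewrite expr0 scale1r -[in LHS]A_selfadj /adj map_trmx.
Qed.

Lemma adj_mx_fun f n (A : 'M[C]_n) : adj (mx_fun f A) = mx_fun f A.
Proof.
rewrite /mx_fun invmx_unitary ?spectral_unitarymx //.
set P := spectralmx A; set D := diag_mx _.
have D_selfadj : adj D = D.
  apply/matrixP => i j; rewrite /D /adj !mxE eq_sym.
  by case: (eqVneq i j) => [->|_]; rewrite ?mulr1n ?mulr0n ?rmorph0 ?conjC_real.
rewrite !adjM D_selfadj mulmxA; congr (_ *m _ *m _); first by rewrite /adj map_trmx.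
by apply/matrixP => i j; rewrite !mxE conjCK.
Qed.

Lemma mxtrace_mx_fun f n (A : 'M[C]_n) :
  \tr (mx_fun f A) = \sum_i (f (complex.Re (spectral_diag A 0 i)))%:C.
Proof.
rewrite /mx_fun mxtrace_mulC mulmxA mulmxV ?spectral_unit // mul1mx mxtrace_diag.
by apply: eq_bigr => i _; rewrite mxE.
Qed.

Lemma mxtrace_exp_normal n (A : 'M[C]_n) k : A \is normalmx ->
  \tr (A ^+ k) = \sum_i spectral_diag A 0 i ^+ k.
Proof.
move=> /orthomx_spectralP {1}->.
rewrite invmx_conjX ?spectral_unit // mxtrace_mulC mulmxA mulmxV ?spectral_unit //.
by rewrite mul1mx diag_mxX mxtrace_diag; apply: eq_bigr => i _; rewrite mxE.
Qed.

Lemma mxtrace_mx_fun_poly f n (A : 'M[C]_n) (q : {poly C}) : A \is normalmx ->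
  (forall i, q.[spectral_diag A 0 i] = (f (complex.Re (spectral_diag A 0 i)))%:C) ->
  \tr (mx_fun f A) = \sum_(k < size q) q`_k * \tr (A ^+ k).
Proof.
move=> A_normal q_interp; rewrite mxtrace_mx_fun.
under eq_bigr => i _ do rewrite -q_interp horner_coef.
rewrite exchange_big /=; apply: eq_bigr => k _.
by rewrite mxtrace_exp_normal // mulr_sumr.
Qed.

Lemma mxtrace_mx_fun_eq f n n' (A : 'M[C]_n) (A' : 'M[C]_n') : f 0 = 0 ->
  A \is normalmx -> A' \is normalmx ->
  (forall k, \tr (A ^+ k.+1) = \tr (A' ^+ k.+1)) ->
  \tr (mx_fun f A) = \tr (mx_fun f A').
Proof.
move=> f0 A_normal A'_normal trAA'.
pose spec n (B : 'M[C]_n) := [seq spectral_diag B 0 i | i <- enum 'I_n].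
have [q q_interp] := @exists_interpolation_poly _ _ (fun z => (f (complex.Re z))%:C)
  (undup_uniq (0 :: spec n A ++ spec n' A')).
have q_spec n1 (B : 'M[C]_n1) : {subset spec n1 B <= spec n A ++ spec n' A'} ->
    forall i, q.[spectral_diag B 0 i] = (f (complex.Re (spectral_diag B 0 i)))%:C.
  move=> sub_spec i; apply: q_interp; rewrite mem_undup in_cons sub_spec ?orbT //.
  by apply/mapP; exists i; rewrite ?mem_enum.
have q0 : q`_0 = 0.
  by rewrite -horner_coef0 q_interp ?mem_undup ?mem_head //= f0.
rewrite (mxtrace_mx_fun_poly A_normal (q_spec _ _ _)); last first.
  by move=> z z_spec; rewrite mem_cat z_spec.
rewrite (mxtrace_mx_fun_poly A'_normal (q_spec _ _ _)); last first.
  by move=> z z_spec; rewrite mem_cat z_spec orbT.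
by apply: eq_bigr => -[[|k] _] _ /=; rewrite ?q0 ?mul0r // trAA'.
Qed.

Lemma vN_entropy_gram m n (Y : 'M[C]_(m, n)) (c : R) :
  vN_entropy (c%:C *: (Y *m adj Y)) = vN_entropy (c%:C *: (Y^T *m adj Y^T)).
Proof.
have adjT : Y^T *m adj Y^T = (adj Y *m Y)^T.
  by apply/matrixP => i j; rewrite !mxE; apply: eq_bigr => k _; rewrite !mxE mulrC.
have gram_selfadj p q (Z : 'M[C]_(p, q)) : adj (c%:C *: (Z *m adj Z)) = c%:C *: (Z *m adj Z).
  by rewrite adjZ adjM adjK conjC_real.
congr (- complex.Re _); apply: mxtrace_mx_fun_eq.
- by rewrite /xlnx eqxx.
- exact/selfadj_normalmx/gram_selfadj.
- exact/selfadj_normalmx/gram_selfadj.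
- by move=> k; rewrite !scalemxX !mxtraceZ adjT trmxX mxtrace_tr mxtrace_expMC.
Qed.

Definition bipart_mx n m (v : 'cV[C]_(n * m)) : 'M[C]_(n, m) :=
  \matrix_(i, k) v (mxtens_index (i, k)) 0.

Lemma ptrR_ketbra n m (v : 'cV[C]_(n * m)) :
  ptrR (ketbra v) = bipart_mx v *m adj (bipart_mx v).
Proof.
apply/matrixP => i j; rewrite !mxE; apply: eq_bigr => k _.
by rewrite !mxE big_ord1 !mxE.
Qed.

Lemma ptrS_ketbra n m (v : 'cV[C]_(n * m)) :
  ptrS (ketbra v) = (bipart_mx v)^T *m adj (bipart_mx v)^T.
Proof.
apply/matrixP => i j; rewrite !mxE; apply: eq_bigr => k _.
by rewrite !mxE big_ord1 !mxE.
Qed.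

Lemma bipart_mx_tens1 n m (S : 'M[C]_n) (v : 'cV[C]_(n * m)) :
  bipart_mx ((S *t 1%:M) *m v) = S *m bipart_mx v.
Proof.
apply/matrixP => i k; rewrite !mxE.
rewrite (reindex (@mxtens_index n m)) /=; last first.
  by exists (@mxtens_unindex n m) => x _; [apply: mxtens_indexK | apply: mxtens_unindexK].
rewrite (eq_bigr (fun p => (S *t 1%:M) (mxtens_index (i, k)) (mxtens_index (p.1, p.2))
  * v (mxtens_index (p.1, p.2)) 0)); last by case.
rewrite -(pair_bigA _ (fun j l => (S *t 1%:M) (mxtens_index (i, k)) (mxtens_index (j, l))
  * v (mxtens_index (j, l)) 0)) /=.
apply: eq_bigr => j _; rewrite (bigD1 k) //= big1 ?addr0.
  by rewrite tensmxE !mxE eqxx mulr1.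
by move=> l lk; rewrite tensmxE !mxE eq_sym (negbTE lk) mulr0 mul0r.
Qed.

End QuantumEntropy.

Theorem theorem4p6 (R : realType) (n m : nat) (B : finType)
  (rho : 'M[R[i]]_n) (E : B -> 'M[R[i]]_n) (Psi : 'cV[R[i]]_(n * m)) :
  density rho -> povm E -> ptrR (ketbra Psi) = rho ->
  let p := fun b => complex.Re (\tr (E b *m rho)) in
  let rho_b := fun b => ((p b)^-1)%:C *: (msqrt (E b) *m rho *m msqrt (E b)) in
  let rhoR := ptrS (ketbra Psi) in
  let rhoR_b := fun b => ((p b)^-1)%:C *:
        ptrS ((msqrt (E b) *t 1%:M) *m ketbra Psi *m (msqrt (E b) *t 1%:M)) in
  vN_entropy rho - \sum_(b | 0 < p b) p b * vN_entropy (rho_b b)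
  = vN_entropy rhoR - \sum_(b | 0 < p b) p b * vN_entropy (rhoR_b b).
Proof.
move=> _ _ rho_Psi p rho_b rhoR rhoR_b.
have S_rho : vN_entropy rho = vN_entropy rhoR.
  have := vN_entropy_gram (bipart_mx Psi) 1.
  by rewrite !scale1r -ptrR_ketbra -ptrS_ketbra rho_Psi.
have S_rho_b b : vN_entropy (rho_b b) = vN_entropy (rhoR_b b).
  rewrite /rho_b /rhoR_b; set S := msqrt (E b).
  have S_selfadj : adj S = S by exact: adj_mx_fun.
  have S1_selfadj : adj (S *t 1%:M : 'M_(n * m)) = S *t 1%:M.
    by rewrite adj_tens S_selfadj adj1mx.
  have -> : S *m rho *m S = (S *m bipart_mx Psi) *m adj (S *m bipart_mx Psi).
    by rewrite -rho_Psi ptrR_ketbra adjM S_selfadj !mulmxA.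
  have -> : (S *t 1%:M) *m ketbra Psi *m (S *t 1%:M) = ketbra ((S *t 1%:M) *m Psi).
    by rewrite /ketbra adjM S1_selfadj !mulmxA.
  by rewrite ptrS_ketbra bipart_mx_tens1 vN_entropy_gram.
by rewrite S_rho; congr (_ - _); apply: eq_bigr => b _; rewrite S_rho_b.
Qed.
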